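(* Let $R$ be a principal ideal domain. For any two strata $S,T$ of $\mathfrak{A}_2$ and every $q>0$, $\operatorname{Ext}^q_{\operatorname{Rep}(Q_{\mathfrak{A}_2},\rho_{\mathfrak{A}_2})}(I_S,I_T)=0$.
   Context: $\mathfrak{A}_2$ is the stratification of $S^2$ into two points $P_1,P_2$ on a great circle, the two open arcs $E_1,E_2$ between them, and the two open hemispheres $H_1,H_2$. Its quiver $(Q_{\mathfrak{A}_2},\rho_{\mathfrak{A}_2})$ has one vertex per stratum, an arrow $S\to T$ whenever $S\subsetneq\overline{T}$ (namely $P_i\to E_j$, $E_j\to H_k$, $P_i\to H_k$), and relations identifying all paths with the same endpoints; $\operatorname{Rep}$ denotes the category of representations by $R$-modules satisfying the relations. For a stratum $S$, $I_S$ is the representation with $R$ at $S$ and at every vertex $T$ with $T\subset\overline{S}$ (i.e. having a path to $S$), $0$ at all other vertices, identity maps on arrows between vertices carrying $R$ and zero maps otherwise; it corresponds to the sheaf $i_!R_{\overline S}$, $i:\overline S\hookrightarrow S^2$. *)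

From HB Require Import structures.
From mathcomp Require Import all_boot all_order all_algebra.
From Stdlib Require Import Relations.
Set Implicit Arguments. Set Strict Implicit. Unset Printing Implicit Defensive.
Import GRing.Theory.
Local Open Scope ring_scope.

(** Strata of A_2 : points P1 P2, open arcs E1 E2, open hemispheres H1 H2. *)
Inductive stratum := P1 | P2 | E1 | E2 | H1 | H2.

(** [strat_lt S T] : S is strictly contained in the closure of T,
    i.e. there is an arrow S -> T in the quiver Q_{A_2}. *)
Definition strat_lt (S T : stratum) : bool :=
  match S, T with
  | (P1 | P2), (E1 | E2 | H1 | H2) => true
  | (E1 | E2), (H1 | H2) => true
  | _, _ => false
  end.

Definition strat_eqb (S T : stratum) : bool :=
  match S, T with
  | P1, P1 | P2, P2 | E1, E1 | E2, E2 | H1, H1 | H2, H2 => true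
  | _, _ => false
  end.

Definition strat_le (S T : stratum) : bool := strat_eqb S T || strat_lt S T.

Definition is_ideal (R : idomainType) (I : R -> Prop) : Prop :=
  [/\ I 0, (forall x y, I x -> I y -> I (x + y)) & (forall a x, I x -> I (a * x))].

Definition PID (R : idomainType) : Prop :=
  forall I : R -> Prop, @is_ideal R I ->
    exists g : R, forall x, I x <-> exists a, x = a * g.

Definition lin (R : idomainType) (U V : lmodType R) (f : U -> V) : Prop :=
  forall (a : R) (x y : U), f (a *: x + y) = a *: f x + f y.
Arguments lin {R U V} f.

(** Representations of (Q_{A_2}, rho_{A_2}) by R-modules: an R-module at each
    vertex, an R-linear map for each arrow, and every path of length 2 equals
    the direct arrow with the same endpoints (these are all the relations,
    since all paths have length <= 2). *)
Record rep (R : idomainType) := Rep {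
  rmod : stratum -> lmodType R;
  rarr : forall S T, strat_lt S T -> rmod S -> rmod T;
  rarr_lin : forall S T (h : strat_lt S T), lin (rarr S T h);
  rarr_rel : forall S T U (h1 : strat_lt S T) (h2 : strat_lt T U)
               (h3 : strat_lt S U) x, rarr T U h2 (rarr S T h1 x) = rarr S U h3 x }.
Arguments rarr {R} r {S T} h _ : rename.

Record hom (R : idomainType) (A B : rep R) := Hom {
  hcomp : forall S, rmod A S -> rmod B S;
  hcomp_lin : forall S, lin (hcomp S);
  hcomp_nat : forall S T (h : strat_lt S T) x,
      hcomp T (rarr A h x) = rarr B h (hcomp S x) }.
Arguments hcomp {R A B} h S _ : rename.

Definition hom_iso (R : idomainType) (A B : rep R) (f : hom A B) : Prop :=
  forall S, bijective (hcomp f S).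

Definition exact_at (R : idomainType) (A B C : rep R)
    (f : hom A B) (g : hom B C) : Prop :=
  forall S (y : rmod B S), hcomp g S y = 0 <-> exists x, hcomp f S x = y.

(** A q-fold (Yoneda) extension of A by B:
    0 -> Y_0 -> Y_1 -> ... -> Y_q -> Y_(q+1) -> 0 exact, with Y_0 ~= B and
    Y_(q+1) ~= A (objects Y_i for i > q+1 are irrelevant). *)
Record yext (R : idomainType) (q : nat) (A B : rep R) := YExt {
  yobj : nat -> rep R;
  ydiff : forall i, hom (yobj i) (yobj i.+1);
  yleft : hom B (yobj 0);
  yright : hom (yobj q.+1) A;
  yleft_iso : hom_iso yleft;
  yright_iso : hom_iso yright;
  ydiff_inj : forall S, injective (hcomp (ydiff 0) S);
  ydiff_exact : forall i, (i < q)%N -> exact_at (ydiff i) (ydiff i.+1);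
  ydiff_surj : forall S y, exists x, hcomp (ydiff q) S x = y }.

Definition yext_mor (R : idomainType) (q : nat) (A B : rep R)
    (E E' : yext q A B) : Prop :=
  exists phi : forall i, hom (yobj E i) (yobj E' i),
    [/\ forall i, (i <= q)%N -> forall S x,
          hcomp (phi i.+1) S (hcomp (ydiff E i) S x)
          = hcomp (ydiff E' i) S (hcomp (phi i) S x),
        forall S x, hcomp (phi 0%N) S (hcomp (yleft E) S x) = hcomp (yleft E') S x
      & forall S x, hcomp (yright E') S (hcomp (phi q.+1) S x) = hcomp (yright E) S x].

(** Yoneda Ext^q(A,B) is the set of classes of q-extensions modulo the
    equivalence relation generated by morphisms of extensions.
    Ext^q(A,B) = 0 iff there is only one class. *)
Definition Ext_zero (R : idomainType) (q : nat) (A B : rep R) : Prop :=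
  forall E E' : yext q A B, clos_refl_sym_trans (yext q A B) (@yext_mor R q A B) E E'.

(** The representation I_S: R (= 'rV_1) at every T with T in closure(S),
    0 (= 'rV_0) elsewhere; identity maps between copies of R, zero otherwise.
    The map along an arrow is right multiplication by the all-ones matrix,
    which is the identity 'rV_1 -> 'rV_1 and zero when a side is 'rV_0. *)
Definition Imod (R : idomainType) (S : stratum) (T : stratum) : lmodType R :=
  'rV[R]_(strat_le T S).

Definition Iarr (R : idomainType) (S : stratum) (T U : stratum)
    (h : strat_lt T U) (x : Imod R S T) : Imod R S U :=
  x *m const_mx 1.

Lemma Iarr_lin (R : idomainType) S T U (h : strat_lt T U) : lin (@Iarr R S T U h).
Proof. by move=> a x y; rewrite /Iarr mulmxDl scalemxAl. Qed.

Lemma const1_mul (R : idomainType) (a b c : bool) : (a && c ==> b) ->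
  (const_mx 1 : 'M[R]_(a, b)) *m (const_mx 1 : 'M[R]_(b, c)) = const_mx 1.
Proof.
move=> H; apply/matrixP => i j; rewrite !mxE.
case: b H => [_|].
  by rewrite big_ord1 !mxE mulr1.
case: a i => [|[] //]; case: c j => [|[] //] //.
Qed.

Lemma strat_mid S T U X : strat_lt S T -> strat_lt T U ->
  strat_le S X && strat_le U X ==> strat_le T X.
Proof. by case: S; case: T; case: U; case: X. Qed.

Lemma Iarr_rel (R : idomainType) S T U V (h1 : strat_lt T U) (h2 : strat_lt U V)
  (h3 : strat_lt T V) x : @Iarr R S U V h2 (@Iarr R S T U h1 x) = @Iarr R S T V h3 x.
Proof. by rewrite /Iarr -mulmxA const1_mul // strat_mid. Qed.

Definition Irep (R : idomainType) (S : stratum) : rep R :=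
  @Rep R (Imod R S) (@Iarr R S) (@Iarr_lin R S) (@Iarr_rel R S).

(** Write A := I_S and B := I_T.  Evaluation of a representation at the vertex
   T has a right adjoint, the coinduction [coind N] (the module N at every
   stratum X lying in the closure of T, identity maps between them, 0
   elsewhere); I_T is the coinduction of R.  A morphism M -> coind N is the
   same as an R-linear map M(T) -> N.

   We compare every q-extension E : 0 -> B -> Y_0 -> ... -> Y_(q+1) -> A -> 0
   with the split extension [split_ext], built from representations of the
   form [coind N ⊕ A] (the family [MixRep]):
     0 -> B -> B -> 0 -> ... -> 0 -> A -> A -> 0       (q >= 2),
     0 -> B -> B ⊕ A -> A -> 0                          (q = 1).
   Everything rests on one observation: at the vertex T the last map
   Y_q(T) -> Y_(q+1)(T) ~= A(T) has a free target (R or 0), so it has a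
   linear section.
   - q = 1: the section splits the short exact sequence of R-modules at T,
     giving a retraction of Y_0(T) -> Y_1(T), and hence a morphism of
     extensions E -> split_ext.
   - q >= 2: the complex Y(T), made exact at position q by adding the image
     of the section, coinduces (plus copies of A) an extension [coind_ext];
     the adjunction units give E -> coind_ext, and B -> Y_0(T) -> Y_1(T)
     gives split_ext -> coind_ext.
   Hence every extension is connected to split_ext, so Ext^q(A, B) = 0.  The
   argument works over any integral domain. *)

From HB Require Import structures.
From mathcomp Require Import all_boot all_order all_algebra.
From Stdlib Require Import Relations IndefiniteDescription.
Import GRing.Theory.
Local Open Scope ring_scope.
Set Implicit Arguments. Unset Strict Implicit. Unset Printing Implicit Defensive.

Section LinearMaps.
Variable R : idomainType.
Implicit Types U V W : lmodType R.

Lemma lin0 U V (f : U -> V) : lin f -> f 0 = 0.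
Proof.
move=> h; apply: (addrI (f 0)); rewrite addr0.
by rewrite -{1}(scale1r (f 0)) -h scale1r addr0.
Qed.

Lemma linD U V (f : U -> V) : lin f -> forall x y, f (x + y) = f x + f y.
Proof. by move=> h x y; have := h 1 x y; rewrite !scale1r. Qed.

Lemma linZ U V (f : U -> V) : lin f -> forall a x, f (a *: x) = a *: f x.
Proof. by move=> h a x; have := h a x 0; rewrite !addr0 (lin0 h) addr0. Qed.

Lemma linB U V (f : U -> V) : lin f -> forall x y, f (x - y) = f x - f y.
Proof. by move=> h x y; rewrite (linD h) -scaleN1r (linZ h) scaleN1r. Qed.

Lemma lin_zero U V : lin (fun _ : U => 0 : V).
Proof. by move=> a x y; rewrite scaler0 addr0. Qed.

Lemma lin_id U : lin (@id U).
Proof. by []. Qed.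

Lemma lin_inv U V (f : U -> V) (g : V -> U) :
  lin f -> cancel f g -> cancel g f -> lin g.
Proof. by move=> hf fK gK c x y; apply: (can_inj fK); rewrite hf !gK. Qed.

Lemma pair_eq0 U V (p : (U * V)%type) : p = 0 <-> p.1 = 0 /\ p.2 = 0.
Proof. by split=> [-> //|[h1 h2]]; apply: injective_projections. Qed.

Lemma hom0 (M N : rep R) (f : hom M N) X : hcomp f X 0 = 0.
Proof. exact: lin0 (hcomp_lin f X). Qed.

Lemma exact_comp0 (M N P : rep R) (f : hom M N) (g : hom N P) X x :
  exact_at f g -> hcomp g X (hcomp f X x) = 0.
Proof. by move=> ex; apply/(ex X _).2; exists x. Qed.

Lemma split_retraction U V W (d0 : U -> V) (d1 : V -> W)
  (l0 : lin d0) (l1 : lin d1) (inj : injective d0)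
  (ex : forall y, d1 y = 0 -> exists x, d0 x = y) (cx : forall x, d1 (d0 x) = 0)
  (s : W -> V) (ls : lin s) (hs : forall w, d1 (s w) = w) :
  exists rho : V -> U, lin rho /\ forall x, rho (d0 x) = x.
Proof.
have H y : exists x, d0 x = y - s (d1 y) by apply: ex; rewrite (linB l1) hs subrr.
pose pre y := proj1_sig (constructive_indefinite_description _ (H y)).
have preP y : d0 (pre y) = y - s (d1 y).
  by rewrite /pre; case: constructive_indefinite_description.
exists pre; split.
  move=> a x y; apply: inj; rewrite l0 !preP l1 ls.
  by rewrite scalerBr addrACA opprD.
by move=> x; apply: inj; rewrite preP cx (lin0 ls) subr0.
Qed.

End LinearMaps.

Section BoolRows.
Variable R : idomainType.

(** Row vectors of length b : bool model "R if b, else 0"; multiplication by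
    the all-ones matrix is the identity between two copies of R. *)
Lemma mul_const1 (b : bool) (x : 'rV[R]_b) : x *m const_mx 1 = x.
Proof.
case: b x => x; apply/matrixP => i j; rewrite !mxE.
  by rewrite big_ord1 mxE mulr1 (ord1 j).
by case: j.
Qed.

Lemma row_empty_eq (c : bool) (x y : 'rV[R]_c) : c = false -> x = y.
Proof. by move=> hc; move: x y; rewrite hc => x y; apply/matrixP => i []. Qed.

Lemma row_exact (c0 c1 c2 : bool) (w : 'rV[R]_c1) : (c1 -> c2 = ~~ c0) ->
  (w *m (const_mx 1 : 'M_(c1, c2)) = 0 <-> exists u : 'rV[R]_c0, u *m const_mx 1 = w).
Proof.
case: c1 w => w h.
  move: (h isT) => {h} ->; case: c0.
    split=> _; [by exists w; rewrite mul_const1 | exact: row_empty_eq].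
  rewrite mul_const1; split=> [->|[u <-]]; first by exists 0; rewrite mul0mx.
  by rewrite (row_empty_eq u 0) // mul0mx.
split=> _; last by rewrite (row_empty_eq w 0) // mul0mx.
by exists 0; rewrite mul0mx; exact: row_empty_eq.
Qed.

(** A surjection onto a module isomorphic to R^c (c = 0 or 1) has a linear
    section, because R^c is free. *)
Lemma surj_section (c : bool) (U V : lmodType R) (d : U -> V) (hd : lin d)
  (hs : forall y, exists x, d x = y) (f : V -> 'rV[R]_c) (hf : lin f) (fb : bijective f) :
  exists s : V -> U, lin s /\ forall w, d (s w) = w.
Proof.
case: c f hf fb => f hf [g fK gK].
  have [z0 hz0] := hs (g (const_mx 1)).
  exists (fun w => f w 0 0 *: z0); split.
    by move=> a x y /=; rewrite hf !mxE scalerDl scalerA.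
  move=> w; rewrite (linZ hd) hz0; apply: (can_inj fK).
  rewrite (linZ hf) gK; apply/matrixP => i j.
  by rewrite !mxE (ord1 i) (ord1 j) mulr1.
exists (fun _ => 0); split; first exact: lin_zero.
by move=> w; rewrite (lin0 hd); apply: (can_inj fK); exact: row_empty_eq.
Qed.

End BoolRows.

Section Optional.
Variables (R : idomainType) (N : lmodType R).

(** [opt c] is "N if c, else 0", realized as functions 'I_c -> N;
    [oget] reads the value and [oput] builds it. *)
Definition opt (c : bool) : lmodType R := {ffun 'I_c -> N}.
Definition oget (c : bool) (F : opt c) : N := \sum_(j < c) F j.
Definition oput (c : bool) (v : N) : opt c := [ffun _ => v].

Lemma oget_oput (c : bool) (v : N) : oget (oput c v) = if c then v else 0.
Proof. by case: c; rewrite /oget ?big_ord1 ?big_ord0 ?ffunE. Qed.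

Lemma oget_oputT (c : bool) (v : N) : c -> oget (oput c v) = v.
Proof. by move=> hc; rewrite oget_oput hc. Qed.

Lemma oget_empty (c : bool) (F : opt c) : c = false -> oget F = 0.
Proof. by move=> hc; move: F; rewrite hc => F; rewrite /oget big_ord0. Qed.

Lemma opt_eq (c : bool) (F F' : opt c) : (c -> oget F = oget F') -> F = F'.
Proof.
case: c F F' => F F' h; apply/ffunP => j.
  by move: (h isT); rewrite /oget !big_ord1 (ord1 j).
by case: j.
Qed.

Lemma oget_lin (c : bool) : lin (@oget c).
Proof.
move=> a F F'; case: c F F' => F F'; rewrite /oget ?big_ord1 ?big_ord0 ?ffunE //.
by rewrite scaler0 addr0.
Qed.

Lemma oget0 (c : bool) : oget (0 : opt c) = 0.
Proof. exact: lin0 (@oget_lin c). Qed.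

Lemma oput_lin (c : bool) : lin (@oput c).
Proof. by move=> a x y; apply/ffunP => j; rewrite !ffunE. Qed.

End Optional.

Lemma strat_le_down X Z Y : strat_lt X Z -> strat_le Z Y -> strat_le X Y.
Proof. by case: X; case: Z; case: Y. Qed.

Lemma strat_le_down_if (a : bool) X Y W U : strat_lt X Y -> strat_lt Y W ->
  (a && strat_le X U) && (a && strat_le W U) ==> (a && strat_le Y U).
Proof.
move=> h1 h2; case: a => //=; apply/implyP => /andP[_ hW].
exact: strat_le_down h2 hW.
Qed.

(** [transport M X Y] : M(X) -> M(Y) is the structure map of the arrow X -> Y,
    the identity if X = Y, and 0 if there is no path from X to Y. *)
Definition transport (R : idomainType) (M : rep R) (X Y : stratum) : rmod M X -> rmod M Y.
Proof.
case: X; case: Y;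
  first [exact id | (refine (rarr M _); exact (erefl true)) | exact (fun _ => 0)].
Defined.
Arguments transport {R} M X Y _.

Section Transport.
Variable R : idomainType.

Lemma rarr_irr (M : rep R) X Z (h h' : strat_lt X Z) x : rarr M h x = rarr M h' x.
Proof. by rewrite (bool_irrelevance h h'). Qed.

Lemma transport_arr (M : rep R) X Z Y (h : strat_lt X Z) x : strat_le Z Y ->
  transport M Z Y (rarr M h x) = transport M X Y x.
Proof.
case: X Z Y h x => [] [] [] //= h x // _;
  first [ exact: rarr_irr | exact: rarr_rel | done ].
Qed.

Lemma transport_lin (M : rep R) X Y : lin (transport M X Y).
Proof. by case: X; case: Y => //=; first [exact: rarr_lin | exact: lin_zero]. Qed.

Lemma transport_nat (M N : rep R) (f : hom M N) X Y x :
  hcomp f Y (transport M X Y x) = transport N X Y (hcomp f X x).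
Proof. by case: X Y x => [] [] x //=; first [exact: hcomp_nat | exact: hom0]. Qed.

Lemma transport_Irep_bij T X : strat_le X T -> bijective (transport (Irep R T) X T).
Proof. by case: X; case: T => //= _; exists id => x //=; rewrite /Iarr mul_const1. Qed.

End Transport.

Lemma if_zero (V : zmodType) (c : bool) (x : V) : (~~ c -> x = 0) ->
  (if c then x else 0) = x.
Proof. by case: c => // ->. Qed.

Section MixedRepresentations.
Variables (R : idomainType) (S T : stratum).
Local Notation A := (Irep R S).
Local Notation B := (Irep R T).

(** [MixRep b N a] : X |-> (N if b and X ⊆ cl T) ⊕ (R if a and X ⊆ cl S), i.e.
    (coinduction of N from T if b) ⊕ (A if a); [ARep a] is its A-summand. *)
Definition mixmod (b : bool) (N : lmodType R) (a : bool) (X : stratum) : lmodType R :=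
  (opt N (b && strat_le X T) * 'rV[R]_(a && strat_le X S))%type.
Definition mixarr b N a X Z (h : strat_lt X Z) (p : mixmod b N a X) : mixmod b N a Z :=
  (oput _ (oget p.1), p.2 *m const_mx 1).

Lemma mixarr_lin b N a X Z (h : strat_lt X Z) : lin (@mixarr b N a X Z h).
Proof.
move=> c p p'; apply: injective_projections => /=.
  by rewrite (oget_lin c p.1 p'.1) (oput_lin _ c).
by rewrite mulmxDl scalemxAl.
Qed.

Lemma mixarr_rel b N a X Y W (h1 : strat_lt X Y) (h2 : strat_lt Y W) (h3 : strat_lt X W) p :
  @mixarr b N a Y W h2 (@mixarr b N a X Y h1 p) = @mixarr b N a X W h3 p.
Proof.
apply: injective_projections => /=.
  apply: opt_eq => H; rewrite !oget_oput H.
  have -> // : b && strat_le Y T.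
  by move: H => /andP[-> hW] /=; exact: strat_le_down h2 hW.
by rewrite -mulmxA const1_mul // strat_le_down_if.
Qed.

Definition MixRep b N a : rep R :=
  @Rep R (mixmod b N a) (@mixarr b N a) (@mixarr_lin b N a) (@mixarr_rel b N a).

Definition amod (a : bool) (X : stratum) : lmodType R := 'rV[R]_(a && strat_le X S).
Definition aarr a X Z (h : strat_lt X Z) (v : amod a X) : amod a Z := v *m const_mx 1.
Lemma aarr_lin a X Z (h : strat_lt X Z) : lin (@aarr a X Z h).
Proof. by move=> c x y; rewrite /aarr mulmxDl scalemxAl. Qed.
Lemma aarr_rel a X Y W (h1 : strat_lt X Y) (h2 : strat_lt Y W) (h3 : strat_lt X W) v :
  @aarr a Y W h2 (@aarr a X Y h1 v) = @aarr a X W h3 v.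
Proof. by rewrite /aarr -mulmxA const1_mul // strat_le_down_if. Qed.
Definition ARep a : rep R := @Rep R (amod a) (@aarr a) (@aarr_lin a) (@aarr_rel a).

Definition zero_hom (M N : rep R) : hom M N.
Proof.
apply: (@Hom R M N (fun X _ => 0)); first by move=> X; exact: lin_zero.
by move=> X Z h x; rewrite (lin0 (rarr_lin N _ _ h)).
Defined.

(** The coinduction adjunction: a linear map m : M(T) -> N together with a
    morphism M -> ARep a yields a morphism M -> MixRep b N a. *)
Section HomInto.
Variables (M : rep R) (b : bool) (N : lmodType R) (a : bool).
Variables (m : rmod M T -> N) (hm : lin m) (ap : hom M (ARep a)).

Definition hom_into_f X (x : rmod M X) : mixmod b N a X :=
  (oput _ (m (transport M X T x)), hcomp ap X x).

Lemma hom_into_lin X : lin (@hom_into_f X).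
Proof.
move=> c x y; apply: injective_projections => /=.
  by rewrite (@transport_lin _ M X T) hm (oput_lin _ c).
by rewrite (hcomp_lin ap X).
Qed.

Lemma hom_into_nat X Z (h : strat_lt X Z) x :
  hom_into_f (rarr M h x) = rarr (MixRep b N a) h (hom_into_f x).
Proof.
apply: injective_projections => /=; last by rewrite (hcomp_nat ap).
apply: opt_eq => H; rewrite !oget_oput H.
move: H => /andP[-> hZ] /=; rewrite (strat_le_down h hZ).
by rewrite transport_arr.
Qed.

Definition hom_into : hom M (MixRep b N a) :=
  @Hom R M (MixRep b N a) hom_into_f hom_into_lin hom_into_nat.
End HomInto.

Section MixMap.
Variables (b b' : bool) (N N' : lmodType R) (a a' : bool).
Variables (h : N -> N') (hh : lin h).

Definition mix_map_f X (p : mixmod b N a X) : mixmod b' N' a' X :=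
  (oput _ (h (oget p.1)), p.2 *m const_mx 1).

Lemma mix_map_lin X : lin (@mix_map_f X).
Proof.
move=> c x y; apply: injective_projections => /=.
  by rewrite (oget_lin c x.1 y.1) hh (oput_lin _ c).
by rewrite mulmxDl scalemxAl.
Qed.

Lemma mix_map_nat X Z (hXZ : strat_lt X Z) p :
  mix_map_f (rarr (MixRep b N a) hXZ p) = rarr (MixRep b' N' a') hXZ (mix_map_f p).
Proof.
apply: injective_projections => /=.
  apply: opt_eq => /andP[hb' hZ]; rewrite !oget_oput.
  have hX := strat_le_down hXZ hZ.
  rewrite (_ : b' && strat_le Z T = true); last by rewrite hb' hZ.
  rewrite (_ : b' && strat_le X T = true); last by rewrite hb' hX.
  rewrite hZ andbT if_zero // => hb.
  by rewrite oget_empty // (negbTE hb).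
by rewrite -!mulmxA !const1_mul //; case: a' a => [] [] //=; apply/implyP => /andP[].
Qed.

Definition mix_map : hom (MixRep b N a) (MixRep b' N' a') :=
  @Hom R (MixRep b N a) (MixRep b' N' a') mix_map_f mix_map_lin mix_map_nat.

Lemma mix_map_inj : (b -> b') -> injective h -> (a -> a') ->
  forall X, injective (hcomp mix_map X).
Proof.
move=> hbb hinj haa X p p' /= E.
have E1 := f_equal fst E; have E2 := f_equal snd E; move: E1 E2 => /= E1 E2.
apply: injective_projections.
  apply: opt_eq => /andP[hb hle]; apply: hinj.
  have hb' : b' && strat_le X T by rewrite hbb.
  by have := congr1 (@oget _ _ _) E1; rewrite !oget_oputT.
have back : forall v : 'rV[R]_(a && strat_le X S),
    v = (v *m (const_mx 1 : 'M_(_, a' && strat_le X S))) *m const_mx 1.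
  move=> v; rewrite -mulmxA const1_mul ?mul_const1 //.
  by case: a haa => //= ->; case: (strat_le X S).
by rewrite (back p.2) (back p'.2) E2.
Qed.

Lemma mix_map_surj : (b' -> b) -> (b' -> forall y, exists x, h x = y) -> (a' -> a) ->
  forall X y, exists x, hcomp mix_map X x = y.
Proof.
move=> hbb hsurj haa X [F v].
have [x hx] : exists x, b' -> h x = oget F.
  have [hb'|hb'] : b' \/ ~~ b' by case: b'; [left|right].
  2: by exists 0 => H; rewrite H in hb'.
  by have [x hx] := hsurj hb' (oget F); exists x.
exists (oput _ x, v *m const_mx 1); apply: injective_projections => /=.
  apply: opt_eq => H; move: (H) => /andP[hb' hle].
  have hc : b && strat_le X T by rewrite hle hbb.
  by rewrite oget_oputT // oget_oputT // hx.
rewrite -mulmxA const1_mul ?mul_const1 //.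
by case: a' haa => //= ->; case: (strat_le X S).
Qed.
End MixMap.

Lemma mix_map_exact (b0 b1 b2 : bool) (N0 N1 N2 : lmodType R) (a0 a1 a2 : bool)
  (h0 : N0 -> N1) (hh0 : lin h0) (h1 : N1 -> N2) (hh1 : lin h1) :
  (b1 -> forall v, (b2 -> h1 v = 0) <-> (exists u, b0 /\ h0 u = v)) ->
  (a1 -> a2 = ~~ a0) ->
  exact_at (mix_map b0 b1 a0 a1 hh0) (mix_map b1 b2 a1 a2 hh1).
Proof.
move=> Hg Ha X [F w] /=; rewrite pair_eq0 /=.
have Ha' : a1 && strat_le X S -> a2 && strat_le X S = ~~ (a0 && strat_le X S).
  by move=> /andP[ha1 hle]; rewrite (Ha ha1) hle !andbT.
split.
  move=> [EG EA].
  have [u' hu'] := (row_exact w Ha').1 EA.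
  have [u hu] : exists u : opt N0 (b0 && strat_le X T), oput _ (h0 (oget u)) = F.
    have [hc|hc] : (b1 && strat_le X T) \/ ~~ (b1 && strat_le X T).
      by case: (b1 && strat_le X T); [left|right].
    2: by exists 0; apply: opt_eq => H; rewrite H in hc.
    move: (hc) => /andP[hb1 hle].
    have : b2 -> h1 (oget F) = 0.
      move=> hb2; have := congr1 (@oget _ _ _) EG.
      by rewrite /= oget_oputT ?oget0 // hb2 hle.
    move/(Hg hb1 (oget F)) => [u [hb0 hu]].
    exists (oput _ u); apply: opt_eq => H; rewrite oget_oputT // oget_oputT ?hu //.
    by rewrite hb0 hle.
  by exists (u, u'); apply: injective_projections => /=.
move=> [[u u'] /= E].
have [E1 E2] := (f_equal fst E, f_equal snd E); move: E1 E2 => /= E1 E2.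
split; last by apply/(row_exact w Ha'); exists u'.
apply: opt_eq => H; rewrite oget_oputT // oget0.
move: H => /andP[hb2 hle].
rewrite -E1 oget_oput (_ : b1 && strat_le X T = b1); last by rewrite hle andbT.
case: ifP => hb1; last by rewrite (lin0 hh1).
have [hb0|hb0] := orP (orbN b0); first by apply/(Hg hb1 _).2; [exists (oget u) | ].
by rewrite (oget_empty u) ?(negbTE hb0) // (lin0 hh0) (lin0 hh1).
Qed.

Section Projection.
Variables (b : bool) (N : lmodType R) (a : bool).
Definition mix_proj_f X (p : mixmod b N a X) : rmod A X := p.2 *m const_mx 1.
Lemma mix_proj_lin X : lin (@mix_proj_f X).
Proof. by move=> c x y; rewrite /mix_proj_f /= mulmxDl scalemxAl. Qed.
Lemma mix_proj_nat X Z (h : strat_lt X Z) p :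
  mix_proj_f (rarr (MixRep b N a) h p) = rarr A h (mix_proj_f p).
Proof.
by rewrite /mix_proj_f /= /Iarr -!mulmxA !const1_mul //;
  case: a => //=; apply/implyP => /andP[].
Qed.
Definition mix_proj : hom (MixRep b N a) A :=
  @Hom R (MixRep b N a) A mix_proj_f mix_proj_lin mix_proj_nat.

Lemma mix_proj_iso : b = false -> a = true -> hom_iso mix_proj.
Proof.
move=> hb ha X.
exists (fun v : 'rV[R]_(strat_le X S) => ((0 : opt N _), v *m const_mx 1)).
  move=> [F v] /=; rewrite /mix_proj_f /=; apply: injective_projections => /=.
    by apply: opt_eq => H; exfalso; move: H; rewrite hb.
  by rewrite -mulmxA const1_mul ?mul_const1 // ha /=; case: (strat_le X S).
move=> v /=; rewrite /mix_proj_f /= -mulmxA const1_mul ?mul_const1 // ha /=.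
by case: (strat_le X S).
Qed.
End Projection.

Lemma hom_into_iso (b : bool) (N : lmodType R) (a : bool) (m : rmod B T -> N) (hm : lin m)
  (ap : hom B (ARep a)) : b = true -> a = false -> bijective m ->
  hom_iso (hom_into b hm ap).
Proof.
move=> hb ha [mi mK miK] X.
case hle: (strat_le X T).
  have [ti tK tiK] := transport_Irep_bij R hle.
  exists (fun p : mixmod b N a X => ti (mi (oget p.1))).
    by move=> x /=; rewrite /hom_into_f /= oget_oputT ?hb ?hle // mK tK.
  move=> [F v] /=; rewrite /hom_into_f /=; apply: injective_projections => /=.
    by apply: opt_eq => H; rewrite oget_oputT // tiK miK.
  by apply: row_empty_eq; rewrite ha.
exists (fun _ => 0); first by move=> x /=; apply: row_empty_eq.
move=> [F v] /=; rewrite /hom_into_f /=; apply: injective_projections => /=.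
  by apply: opt_eq => H; exfalso; move: H; rewrite hle andbF.
by apply: row_empty_eq; rewrite ha.
Qed.

End MixedRepresentations.

Unset Implicit Arguments.

Section SplitExtension.
Variables (R : idomainType) (S T : stratum) (q : nat) (hq : (0 < q)%N).
Local Notation A := (Irep R S).
Local Notation B := (Irep R T).

(** B(T) = R, the module that B is coinduced from. *)
Definition BT : lmodType R := rmod B T.

(** Positions of the split extension carrying the coinduced copy of B
    (0 and 1) and the copy of A (q and q+1). *)
Definition b_at (i : nat) : bool := (i <= 1)%N.
Definition a_at (i : nat) : bool := (q <= i)%N && (i <= q.+1)%N.

Lemma a_at0 : a_at 0 = false.
Proof. by rewrite /a_at leqNgt hq. Qed.
Lemma a_atq : a_at q = true.
Proof. by rewrite /a_at leqnn leqnSn. Qed.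
Lemma a_atq1 : a_at q.+1 = true.
Proof. by rewrite /a_at leqnSn leqnn. Qed.

Lemma a_at_exact i : (i < q)%N -> a_at i.+1 -> a_at i.+2 = ~~ a_at i.
Proof.
move=> hi /andP[h1 _].
have ei : i.+1 = q by apply/eqP; rewrite eqn_leq hi h1.
by rewrite /a_at -ei leqnSn leqnn ltnn.
Qed.

Definition split_obj i : rep R := @MixRep R S T (b_at i) BT (a_at i).
Definition split_diff i : hom (split_obj i) (split_obj i.+1) :=
  @mix_map R S T (b_at i) (b_at i.+1) BT BT (a_at i) (a_at i.+1) id (@lin_id R BT).
Definition split_left : hom B (split_obj 0) :=
  @hom_into R S T B (b_at 0) BT (a_at 0) id (@lin_id R BT) (zero_hom _ _).
Definition split_right : hom (split_obj q.+1) A :=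
  @mix_proj R S T (b_at q.+1) BT (a_at q.+1).

Lemma split_left_iso : hom_iso split_left.
Proof. by apply: hom_into_iso => //; [exact: a_at0 | exists id]. Qed.

Lemma split_right_iso : hom_iso split_right.
Proof. by apply: mix_proj_iso; [rewrite /b_at ltnS leqNgt hq | exact: a_atq1]. Qed.

Lemma split_diff_inj X : injective (hcomp (split_diff 0) X).
Proof. by apply: mix_map_inj => //; rewrite a_at0. Qed.

Lemma split_diff_exact i : (i < q)%N -> exact_at (split_diff i) (split_diff i.+1).
Proof.
move=> hi; apply: mix_map_exact; last exact: a_at_exact.
rewrite /b_at => hb v; case: i hi hb => [|i] //= hi hb.
by split=> _; [exists v | ].
Qed.

Lemma split_diff_surj X y : exists x, hcomp (split_diff q) X x = y.
Proof.
have hbq : b_at q.+1 = false by rewrite /b_at ltnS leqNgt hq.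
by apply: mix_map_surj => //; rewrite ?hbq ?a_atq.
Qed.

Definition split_ext : yext q A B :=
  @YExt R q A B split_obj split_diff split_left split_right split_left_iso
    split_right_iso split_diff_inj split_diff_exact split_diff_surj.

Section Comparison.
Variable E : yext q A B.
Local Notation Y i := (yobj E i).

(** [yright_at j] : Y_j -> A is the augmentation at position q+1, 0 elsewhere. *)
Definition yright_at (j : nat) X : rmod (Y j) X -> rmod A X :=
  match PeanoNat.Nat.eq_dec j q.+1 with
  | left e => fun y => hcomp (yright E) X
      (match e in _ = k return rmod (yobj E k) X with erefl => y end)
  | right _ => fun _ => 0
  end.

Lemma yright_at_q1 X y : yright_at q.+1 X y = hcomp (yright E) X y.
Proof.
rewrite /yright_at; case: (PeanoNat.Nat.eq_dec q.+1 q.+1) => [e|//].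
by rewrite (eq_irrelevance e erefl).
Qed.

Lemma yright_at_ne j X y : j <> q.+1 -> yright_at j X y = 0.
Proof. by rewrite /yright_at; case: (PeanoNat.Nat.eq_dec j q.+1). Qed.

Lemma yright_at_lin j X : lin (yright_at j X).
Proof.
rewrite /yright_at; case: (PeanoNat.Nat.eq_dec j q.+1) => [e|_]; last exact: lin_zero.
by subst j; exact: hcomp_lin.
Qed.

Lemma yright_at_nat j X Z (h : strat_lt X Z) y :
  yright_at j Z (rarr (Y j) h y) = yright_at j X y *m const_mx 1.
Proof.
rewrite /yright_at; case: (PeanoNat.Nat.eq_dec j q.+1) => [e|_]; last by rewrite mul0mx.
by subst j; rewrite /= (hcomp_nat (yright E)).
Qed.

Lemma ydiff_comp0 i X y :
  (i < q)%N -> hcomp (ydiff E i.+1) X (hcomp (ydiff E i) X y) = 0.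
Proof. by move=> hi; exact: exact_comp0 (ydiff_exact E i hi). Qed.

(** The A-part of the comparison maps: Y_q -> A through Y_(q+1), and
    Y_(q+1) -> A directly. *)
Definition a_part_f i X (y : rmod (Y i) X) : rmod (@ARep R S (a_at i)) X :=
  (yright_at i.+1 X (hcomp (ydiff E i) X y) + yright_at i X y) *m const_mx 1.

Lemma a_part_lin i X : lin (@a_part_f i X).
Proof.
move=> c x y; rewrite /a_part_f (hcomp_lin (ydiff E i) X) !(yright_at_lin _ _).
by rewrite addrACA -scalerDr mulmxDl scalemxAl.
Qed.

Lemma a_part_nat i X Z (h : strat_lt X Z) y :
  @a_part_f i Z (rarr (Y i) h y) = rarr (@ARep R S (a_at i)) h (@a_part_f i X y).
Proof.
rewrite /a_part_f /= /aarr (hcomp_nat (ydiff E i)) !yright_at_nat -mulmxDl.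
rewrite -!mulmxA !const1_mul //.
  by apply/implyP => /and3P[-> ->].
by apply/implyP => /and3P[_ _ ->].
Qed.

Definition a_part i : hom (Y i) (@ARep R S (a_at i)) :=
  @Hom R _ _ (@a_part_f i) (@a_part_lin i) (@a_part_nat i).

Lemma a_part_comm i X y : (i <= q)%N ->
  hcomp (a_part i.+1) X (hcomp (ydiff E i) X y) = hcomp (a_part i) X y *m const_mx 1.
Proof.
move=> hi /=; rewrite /a_part_f.
have hi1 : i <> q.+1 by move=> e; rewrite e ltnn in hi.
rewrite (yright_at_ne i X y hi1) addr0.
have [ei|ne] := eqVneq i q.
  subst i; rewrite (yright_at_ne q.+2 X _ (fun e => n_Sn _ (esym e))) add0r.
  by rewrite -mulmxA const1_mul // a_atq a_atq1; case: (strat_le X S).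
have hi' : (i < q)%N by rewrite ltn_neqAle ne hi.
rewrite ydiff_comp0 // (lin0 (yright_at_lin _ _)) add0r.
rewrite (yright_at_ne i.+1 X); last by move=> [e]; rewrite e eqxx in ne.
by rewrite !mul0mx.
Qed.

Lemma a_part_right X y : hcomp (a_part q.+1) X y *m const_mx 1 = hcomp (yright E) X y.
Proof.
rewrite /= /a_part_f (yright_at_ne q.+2 X _ (fun e => n_Sn _ (esym e))) add0r.
rewrite yright_at_q1 -mulmxA const1_mul ?mul_const1 //.
by rewrite a_atq1; case: (strat_le X S).
Qed.

Lemma a_part_left X y : hcomp (a_part 0) X y = 0.
Proof. by apply: row_empty_eq; rewrite a_at0. Qed.

(** A retraction of B(T) -> Y_0(T) -> Y_1(T) yields a morphism E -> split_ext;
    the maps r i for i >= 2 are irrelevant. *)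
Section RetractionMorphism.
Variable r : forall i, rmod (Y i) T -> BT.
Hypothesis rlin : forall i, lin (r i).
Hypothesis r_left : forall b, r 0 (hcomp (yleft E) T b) = b.
Hypothesis r_diff : forall y, r 1 (hcomp (ydiff E 0) T y) = r 0 y.

Definition to_split i : hom (Y i) (split_obj i) :=
  @hom_into R S T (Y i) (b_at i) BT (a_at i) (r i) (rlin i) (a_part i).

Lemma retraction_mor : yext_mor E split_ext.
Proof.
exists to_split; split.
- move=> i hi X x /=; rewrite /hom_into_f /mix_map_f /=.
  apply: injective_projections => /=; last exact: a_part_comm.
  apply: opt_eq => H; move: (H) => /andP[hb hle].
  case: i x hi H hb => [|i] x hi H hb //.
  by rewrite !oget_oputT ?H ?hle // -(transport_nat (ydiff E 0)) r_diff.
- move=> X x /=; rewrite /hom_into_f /=; apply: injective_projections => /=.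
    by rewrite -(transport_nat (yleft E)) r_left.
  exact: a_part_left.
- by move=> X x /=; rewrite /mix_proj_f /=; exact: a_part_right.
Qed.
End RetractionMorphism.

(** For q >= 2, given linear maps sig i : Y_(i+2)(T) -> Y_(i+1)(T) whose
    member at i+1 = q is a section of the last differential, the coinduced
    complex of N3 i := Y_i(T) ⊕ (Y_(i+2)(T) if i+1 = q), with differential
    (y, w) |-> d y + sig w, plus the copies of A, is a q-extension. *)
Section CoinducedExtension.
Hypothesis hq2 : (1 < q)%N.
Variable sig : forall i, rmod (Y i.+2) T -> rmod (Y i.+1) T.
Hypothesis siglin : forall i, lin (sig i).
Hypothesis sigsec : forall i, (i.+1 == q) ->
  forall w, hcomp (ydiff E i.+1) T (sig i w) = w.

Definition coind_mod i : lmodType R :=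
  (rmod (Y i) T * opt (rmod (Y i.+2) T) (i.+1 == q))%type.
Definition coind_diff_f i (p : coind_mod i) : coind_mod i.+1 :=
  (hcomp (ydiff E i) T p.1 + sig i (oget p.2), 0).
Lemma coind_diff_lin i : lin (coind_diff_f i).
Proof.
move=> c x y; apply: injective_projections => /=; last by rewrite scaler0 addr0.
rewrite (hcomp_lin (ydiff E i) T) (oget_lin c x.2 y.2) (siglin i).
by rewrite addrACA -scalerDr.
Qed.

Lemma oget_extra i (w : opt (rmod (Y i.+2) T) (i.+1 == q)) :
  (i.+1 != q) -> oget w = 0.
Proof. by move/negbTE; exact: oget_empty. Qed.

Definition c_at (i : nat) : bool := (i <= q)%N.
Definition coind_obj i : rep R := @MixRep R S T (c_at i) (coind_mod i) (a_at i).
Definition coind_diff i : hom (coind_obj i) (coind_obj i.+1) :=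
  @mix_map R S T (c_at i) (c_at i.+1) (coind_mod i) (coind_mod i.+1) (a_at i) (a_at i.+1)
    (coind_diff_f i) (coind_diff_lin i).
Definition coind_left_f (b : BT) : coind_mod 0 := (hcomp (yleft E) T b, 0).
Lemma coind_left_lin : lin coind_left_f.
Proof.
move=> c x y; apply: injective_projections => /=; last by rewrite scaler0 addr0.
exact: hcomp_lin.
Qed.
Definition coind_left : hom B (coind_obj 0) :=
  @hom_into R S T B (c_at 0) (coind_mod 0) (a_at 0) coind_left_f coind_left_lin (zero_hom _ _).
Definition coind_right : hom (coind_obj q.+1) A :=
  @mix_proj R S T (c_at q.+1) (coind_mod q.+1) (a_at q.+1).

Lemma one_neq_q : (1 != q).
Proof. by rewrite neq_ltn hq2. Qed.

Lemma coind_left_iso : hom_iso coind_left.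
Proof.
apply: hom_into_iso => //; first exact: a_at0.
have [g gK Kg] := yleft_iso E T.
exists (fun p : coind_mod 0 => g p.1); first by move=> b; rewrite /coind_left_f /= gK.
move=> [y w]; rewrite /coind_left_f /= Kg; apply: injective_projections => //=.
by apply: opt_eq => H; exfalso; move: H; rewrite (negbTE one_neq_q).
Qed.

Lemma coind_right_iso : hom_iso coind_right.
Proof. by apply: mix_proj_iso; [rewrite /c_at ltnn | exact: a_atq1]. Qed.

Lemma coind_diff_inj X : injective (hcomp (coind_diff 0) X).
Proof.
apply: mix_map_inj; [by rewrite /c_at ltnW | | by rewrite a_at0].
move=> [y w] [y' w'] /= E1; have := f_equal fst E1.
rewrite /= !oget_extra ?one_neq_q // !(lin0 (siglin 0)) !addr0 => /(ydiff_inj E T) ->.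
by congr pair; apply: opt_eq => _; rewrite !oget_extra ?one_neq_q.
Qed.

(** Exactness below position q is that of Y(T); at position q the extra
    summand supplies, through the section, the part of Y_q(T) outside the
    image of Y_(q-1)(T). *)
Lemma coind_exact_below i : (i < q)%N -> (i.+2 <= q)%N -> forall y w,
  (coind_diff_f i.+1 (y, w) = 0) <-> exists x, coind_diff_f i x = (y, w).
Proof.
move=> hi hq' y w; split.
  move=> /pair_eq0 [/= H1 _].
  have gw : oget w = 0.
    have [e|ne] := orP (orbN (i.+2 == q)); last exact: oget_extra.
    have := congr1 (hcomp (ydiff E i.+2) T) H1.
    rewrite (linD (hcomp_lin (ydiff E i.+2) T)) sigsec //.
    by rewrite ydiff_comp0 ?(eqP e) // add0r => ->; exact: hom0.
  move: H1; rewrite gw (lin0 (siglin _)) addr0 => H1.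
  have [x hx] := (ydiff_exact E i hi T y).1 H1.
  exists (x, 0); rewrite /coind_diff_f /= oget0 (lin0 (siglin _)) addr0 hx.
  by congr pair; apply: opt_eq => _; rewrite gw oget0.
move=> [[x w0] <-]; rewrite /coind_diff_f /= oget_extra; last by rewrite neq_ltn ltnS hq'.
rewrite (lin0 (siglin _)) addr0 ydiff_comp0 // oget0 (lin0 (siglin _)) addr0.
exact/pair_eq0.
Qed.

Lemma coind_exact_top i : i.+1 = q -> forall y w,
  exists x, coind_diff_f i x = (y, w).
Proof.
move=> ei y w; have hi : (i < q)%N by rewrite -ei.
set t := hcomp (ydiff E i.+1) T y.
have eq1 : i.+1 == q by rewrite ei.
have : hcomp (ydiff E i.+1) T (y - sig i t) = 0.
  by rewrite (linB (hcomp_lin (ydiff E i.+1) T)) sigsec // subrr.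
move=> /(ydiff_exact E i hi T _).1 [x hx].
exists (x, oput _ t); rewrite /coind_diff_f /= oget_oputT // hx subrK; congr pair.
by apply: opt_eq => H; exfalso; move: H; rewrite -ei eqn_leq ltnn.
Qed.

Lemma coind_diff_exact i : (i < q)%N -> exact_at (coind_diff i) (coind_diff i.+1).
Proof.
move=> hi; apply: mix_map_exact; last exact: a_at_exact.
move=> hb [y w]; rewrite /c_at.
have [hq'|hq'] := leqP i.+2 q.
  split; first by move=> /(_ isT) /(coind_exact_below i hi hq') [x hx]; exists x;
    split; first exact: ltnW.
  by move=> [x [_ hx]] _; apply/(coind_exact_below i hi hq'); exists x.
have ei : i.+1 = q by apply/eqP; rewrite eqn_leq hi -ltnS hq'.
split=> _ //; have [x hx] := coind_exact_top i ei y w.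
by exists x; split; first exact: ltnW.
Qed.

Lemma coind_diff_surj X y : exists x, hcomp (coind_diff q) X x = y.
Proof. by apply: mix_map_surj => //; rewrite ?a_atq // /c_at ltnn. Qed.

Definition coind_ext : yext q A B :=
  @YExt R q A B coind_obj coind_diff coind_left coind_right coind_left_iso
    coind_right_iso coind_diff_inj coind_diff_exact coind_diff_surj.

Definition unit_f i (y : rmod (Y i) T) : coind_mod i := (y, 0).
Lemma unit_lin i : lin (unit_f i).
Proof.
move=> c x y; apply: injective_projections => //=.
by rewrite scaler0 addr0.
Qed.

Definition unit_hom i : hom (Y i) (coind_obj i) :=
  @hom_into R S T (Y i) (c_at i) (coind_mod i) (a_at i) (unit_f i) (unit_lin i) (a_part i).

Lemma unit_mor : yext_mor E coind_ext.
Proof.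
exists unit_hom; split.
- move=> i hi X x /=; rewrite /hom_into_f /mix_map_f /=.
  apply: injective_projections => /=; last exact: a_part_comm.
  apply: opt_eq => H; move: (H) => /andP[hb hle].
  have hb' : c_at i && strat_le X T by rewrite hle /c_at ltnW.
  rewrite !oget_oputT // /coind_diff_f /unit_f /= oget0 (lin0 (siglin _)) addr0.
  by rewrite (transport_nat (ydiff E i)).
- move=> X x /=; rewrite /hom_into_f /=; apply: injective_projections => /=.
    by rewrite /unit_f /coind_left_f (transport_nat (yleft E)).
  exact: a_part_left.
- by move=> X x /=; rewrite /mix_proj_f /=; exact: a_part_right.
Qed.

Fixpoint left_image (i : nat) : BT -> rmod (Y i) T :=
  match i as n return BT -> rmod (Y n) T with
  | 0 => hcomp (yleft E) T
  | i'.+1 => fun b => hcomp (ydiff E i') T (left_image i' b)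
  end.

Lemma left_image_lin i : lin (left_image i).
Proof.
elim: i => [|i IH] c x y /=; first exact: hcomp_lin.
by rewrite IH (hcomp_lin (ydiff E i) T).
Qed.

Lemma left_image_ge2 i b : (2 <= i)%N -> left_image i b = 0.
Proof.
elim: i => [|i IH] // hi /=.
have [h2|h2] := leqP 2 i; first by rewrite IH // hom0.
by case: i IH hi h2 => [|[|i]] //= IH hi h2; rewrite ydiff_comp0.
Qed.

Definition split_to_coind_f i (b : BT) : coind_mod i := (left_image i b, 0).
Lemma split_to_coind_lin i : lin (split_to_coind_f i).
Proof.
move=> c x y; apply: injective_projections => /=; last by rewrite scaler0 addr0.
exact: left_image_lin.
Qed.

Definition split_to_coind i : hom (split_obj i) (coind_obj i) :=
  @mix_map R S T (b_at i) (c_at i) BT (coind_mod i) (a_at i) (a_at i)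
    (split_to_coind_f i) (split_to_coind_lin i).

Lemma split_to_coind_mor : yext_mor split_ext coind_ext.
Proof.
exists split_to_coind; split.
- move=> i hi X x /=; rewrite /mix_map_f /=.
  apply: injective_projections => /=; last first.
    rewrite -!mulmxA !const1_mul //.
      by apply/implyP => /andP[].
    by apply/implyP => /and3P[_ -> ->].
  apply: opt_eq => H; move: (H) => /andP[hb hle].
  have hb' : c_at i && strat_le X T by rewrite hle /c_at ltnW.
  rewrite [oget (oput (b_at _ && _) _)]oget_oput !oget_oputT //.
  rewrite /coind_diff_f /split_to_coind_f /= oget0 (lin0 (siglin _)) addr0.
  case: i x hi H hb hb' => [|i] x hi H hb hb'; first by rewrite ifT.
  have h2 := left_image_ge2 i.+2; rewrite /= in h2.
  by rewrite !h2.
- move=> X x /=; rewrite /hom_into_f /mix_map_f /=.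
  apply: injective_projections => /=; last by rewrite mul0mx.
  by apply: opt_eq => H; rewrite !oget_oputT.
- move=> X x /=; rewrite /mix_proj_f /mix_map_f /= -mulmxA const1_mul //.
  by apply/implyP => /andP[].
Qed.
End CoinducedExtension.

End Comparison.
End SplitExtension.

(** q = 1: a section of Y_1(T) -> Y_2(T) ~= A(T) splits the exact sequence
    B(T) -> Y_0(T) -> Y_1(T) -> Y_2(T) at T, and the resulting retraction maps
    E to the split extension. *)
Lemma ext1_connected (R : idomainType) (S T : stratum) (hq : (0 < 1)%N)
  (E : yext 1 (Irep R S) (Irep R T)) :
  clos_refl_sym_trans _ (@yext_mor R 1 _ _) E (split_ext R S T 1 hq).
Proof.
have [g gK Kg] := yleft_iso E T.
have glin : lin g := lin_inv (hcomp_lin (yleft E) T) gK Kg.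
have [s [slin ssec]] := surj_section (hcomp_lin (ydiff E 1) T) (ydiff_surj E T)
  (hcomp_lin (yright E) T) (yright_iso E T).
have [rho [rholin rhoK]] := split_retraction (hcomp_lin (ydiff E 0) T)
  (hcomp_lin (ydiff E 1) T) (ydiff_inj E T) (fun y => (ydiff_exact E 0 isT T y).1)
  (fun x => ydiff_comp0 R S T 1 E 0 T x isT) slin ssec.
pose r i := match i return rmod (yobj E i) T -> BT R T with
  | 0 => g | 1 => fun y => g (rho y) | _ => fun _ => 0 end.
apply: rst_step; apply: (retraction_mor R S T 1 hq E r) => //.
- by case=> [|[|i]] //= c x y; rewrite ?rholin ?glin ?scaler0 ?addr0.
- by move=> y /=; rewrite rhoK.
Qed.

Lemma section_family (R : idomainType) (S T : stratum) (q : nat)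
  (E : yext q (Irep R S) (Irep R T)) :
  exists sig : forall i, rmod (yobj E i.+2) T -> rmod (yobj E i.+1) T,
    (forall i, lin (sig i)) /\
    (forall i, i.+1 == q -> forall w, hcomp (ydiff E i.+1) T (sig i w) = w).
Proof.
have Hs i : exists s : rmod (yobj E i.+2) T -> rmod (yobj E i.+1) T,
    lin s /\ (i.+1 == q -> forall w, hcomp (ydiff E i.+1) T (s w) = w).
  have [/eqP e|ne] := orP (orbN (i.+1 == q)).
    subst q; have [s [sl ss]] := surj_section (hcomp_lin (ydiff E i.+1) T)
      (ydiff_surj E T) (hcomp_lin (yright E) T) (yright_iso E T).
    by exists s.
  by exists (fun _ => 0); split; [exact: lin_zero | rewrite (negbTE ne)].
exists (fun i => proj1_sig (constructive_indefinite_description _ (Hs i))).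
by split=> i; case: constructive_indefinite_description => s [].
Qed.

Lemma ext_ge2_connected (R : idomainType) (S T : stratum) (q : nat) (hq : (0 < q)%N)
  (hq2 : (1 < q)%N) (E : yext q (Irep R S) (Irep R T)) :
  clos_refl_sym_trans _ (@yext_mor R q _ _) E (split_ext R S T q hq).
Proof.
have [sig [siglin sigsec]] := section_family R S T q E.
apply: rst_trans (rst_step _ _ _ _ (unit_mor R S T q hq E hq2 sig siglin sigsec)) _.
exact: rst_sym (rst_step _ _ _ _ (split_to_coind_mor R S T q hq E hq2 sig siglin sigsec)).
Qed.

Theorem lemma5p3 (R : idomainType) (HR : PID R) (S T : stratum) (q : nat) :
  (0 < q)%N -> Ext_zero q (Irep R S) (Irep R T).
Proof.
move=> hq.
have connected E : clos_refl_sym_trans _ (@yext_mor R q _ _) E (split_ext R S T q hq).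
  case: q hq E => [|[|q]] // hq E; first exact: ext1_connected.
  exact: ext_ge2_connected.
by move=> E E'; apply: rst_trans (connected E) (rst_sym _ _ _ _ (connected E')).
Qed.
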